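(* Let $f \colon Q \twoheadrightarrow Q'$ be a partial surjection between finite sets and $A$ a simple type. Then $D_Q(A)$ is contained in the domain of the partial function $[\![A]\!]_f$, and the restriction of $[\![A]\!]_f$ to $D_Q(A)$ is the unique function $p_{Q,Q'} \colon D_Q(A) \to D_{Q'}(A)$ satisfying $p_{Q,Q'}([\![M]\!]_Q) = [\![M]\!]_{Q'}$ for all $M \in \Lambda(A)$; in particular $p_{Q,Q'}$ is surjective.
   Context: Simple types are generated from a base type $o$ by $\Rightarrow$; $\Lambda(A)$ is the set of closed simply typed $\lambda$-terms of type $A$ modulo $\beta\eta$. For a finite set $Q$: $[\![o]\!]_Q = Q$, $[\![A\Rightarrow B]\!]_Q$ = all functions $[\![A]\!]_Q \to [\![B]\!]_Q$, and $[\![M]\!]_Q$ is the standard interpretation. $D_Q(A) = \{[\![M]\!]_Q : M \in \Lambda(A)\}$. For $R \subseteq Q\times Q'$, the logical relation $[\![A]\!]_R \subseteq [\![A]\!]_Q \times [\![A]\!]_{Q'}$ is given by $[\![o]\!]_R = R$ and $[\![A\Rightarrow B]\!]_R = \{(g,h) : \forall (x,y)\in[\![A]\!]_R,\ (g(x),h(y))\in[\![B]\!]_R\}$. A partial surjection $f \colon Q \twoheadrightarrow Q'$ is a relation that is the graph of a partial function surjective onto $Q'$; it is a standard fact (which may be used) that then $[\![A]\!]_f$ is also a partial surjection. *)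

From mathcomp Require Import all_boot.
Set Implicit Arguments.
Unset Strict Implicit.
Unset Printing Implicit Defensive.

Inductive ty : Type := o : ty | arr : ty -> ty -> ty.

Inductive var : list ty -> ty -> Type :=
| vz : forall G A, var (A :: G) A
| vs : forall G A B, var G A -> var (B :: G) A.

Inductive tm : list ty -> ty -> Type :=
| tvar : forall G A, var G A -> tm G A
| tlam : forall G A B, tm (A :: G) B -> tm G (arr A B)
| tapp : forall G A B, tm G (arr A B) -> tm G A -> tm G B.

(* Closed terms of type A (Lambda(A) is this modulo beta-eta). *)
Definition closed_tm (A : ty) := tm nil A.

Fixpoint sem (Q : finType) (A : ty) : Type :=
  match A with
  | o => Q
  | arr A B => sem Q A -> sem Q B
  end.

Fixpoint env (Q : finType) (G : list ty) : Type :=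
  match G with
  | nil => unit
  | A :: G => (sem Q A * env Q G)%type
  end.

Fixpoint lookup (Q : finType) G A (x : var G A) : env Q G -> sem Q A :=
  match x in var G A return env Q G -> sem Q A with
  | vz _ _ => fun e => fst e
  | vs _ _ _ x => fun e => lookup x (snd e)
  end.

Fixpoint eval (Q : finType) G A (M : tm G A) : env Q G -> sem Q A :=
  match M in tm G A return env Q G -> sem Q A with
  | tvar _ _ x => fun e => lookup x e
  | tlam _ _ _ M => fun e => fun a => eval M (a, e)
  | tapp _ _ _ M N => fun e => (eval M e) (eval N e)
  end.

Definition interp (Q : finType) A (M : closed_tm A) : sem Q A := eval M tt.

Definition D (Q : finType) (A : ty) (x : sem Q A) : Prop :=
  exists M : closed_tm A, x = interp Q M.

Fixpoint lrel (Q Q' : finType) (R : Q -> Q' -> Prop) (A : ty)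
  : sem Q A -> sem Q' A -> Prop :=
  match A return sem Q A -> sem Q' A -> Prop with
  | o => fun x y => R x y
  | arr A B => fun g h =>
      forall x y, @lrel Q Q' R A x y -> @lrel Q Q' R B (g x) (h y)
  end.

Definition partial_surjection (Q Q' : finType) (R : Q -> Q' -> Prop) : Prop :=
  (forall x y y', R x y -> R x y' -> y = y') /\ (forall y, exists x, R x y).

Arguments lrel {Q Q'} R A _ _.
Arguments interp Q {A} M.
Arguments D {Q A} x.

(* The fundamental lemma of logical relations relates [[M]]_Q to [[M]]_Q' by
   [[A]]_R for every relation R.  For a partial surjection f, [[A]]_f is again
   the graph of a partial function, so [[M]]_Q = [[N]]_Q forces
   [[M]]_Q' = [[N]]_Q': hence [[M]]_Q |-> [[M]]_Q' is a well-defined map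
   D_Q(A) -> D_Q'(A), it is the restriction of [[A]]_f, and it is onto by
   construction. *)

From mathcomp Require Import all_boot.
From Stdlib Require Import Classical IndefiniteDescription FunctionalExtensionality.

Set Implicit Arguments.
Unset Strict Implicit.
Unset Printing Implicit Defensive.

Definition functional_rel (T U : Type) (R : T -> U -> Prop) : Prop :=
  forall x y y', R x y -> R x y' -> y = y'.

Definition surjective_rel (T U : Type) (R : T -> U -> Prop) : Prop :=
  forall y, exists x, R x y.

Section FundamentalLemma.
Variables (Q Q' : finType) (R : Q -> Q' -> Prop).

Fixpoint env_rel (G : list ty) : env Q G -> env Q' G -> Prop :=
  match G return env Q G -> env Q' G -> Prop with
  | nil => fun _ _ => True
  | A :: G => fun e e' => lrel R A e.1 e'.1 /\ env_rel e.2 e'.2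
  end.

Lemma lrel_lookup G A (x : var G A) e e' :
  env_rel e e' -> lrel R A (lookup x e) (lookup x e').
Proof. by elim: x e e' => [{}G {}A | {}G {}A B x IHx] e e' /= [? ?]; auto. Qed.

Lemma lrel_eval G A (M : tm G A) e e' :
  env_rel e e' -> lrel R A (eval M e) (eval M e').
Proof.
elim: M e e' => [{}G {}A x | {}G {}A B M IHM | {}G {}A B M IHM N IHN] e e' ee' /=.
- exact: lrel_lookup.
- by move=> a a' aa'; apply: IHM.
- by apply: IHM => //; apply: IHN.
Qed.

Lemma lrel_interp A (M : closed_tm A) : lrel R A (interp Q M) (interp Q' M).
Proof. exact: lrel_eval. Qed.

End FundamentalLemma.

Lemma inhabited_arrow (T U : Type) :
  inhabited (T -> U) <-> (inhabited T -> inhabited U).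
Proof.
split=> [[g] [t] | tU]; first exact: inhabits (g t).
case: (classic (inhabited T)) => [/tU [u] | nT]; first exact: inhabits (fun=> u).
by apply: inhabits => t; case: nT.
Qed.

Lemma sem_inhabited (Q : finType) A : inhabited Q -> inhabited (sem Q A).
Proof.
case=> q; elim: A => [|A _ B [b]]; [exact: inhabits q | exact: inhabits (fun=> b)].
Qed.

Lemma sem_inhabited_empty (Q Q' : finType) :
  ~ inhabited Q -> ~ inhabited Q' ->
  forall A, inhabited (sem Q A) <-> inhabited (sem Q' A).
Proof.
move=> nQ nQ' A; elim: A => [|A IHA B IHB] /=; first by split=> ?.
by rewrite !inhabited_arrow IHA IHB.
Qed.

(* A preimage of h under [[arr A B]]_f must also be defined on arguments
   outside the domain of [[A]]_f, which needs some element of sem Q B; this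
   is only an issue when Q is empty, and then Q' is empty as well. *)
Lemma sem_arr_default (Q Q' : finType) A B :
  (inhabited Q' -> inhabited Q) -> sem Q A -> sem Q' (arr A B) -> inhabited (sem Q B).
Proof.
move=> Q'Q x h; case: (classic (inhabited Q)) => [/sem_inhabited // | nQ].
have nQ' : ~ inhabited Q' by move/Q'Q.
have [y] : inhabited (sem Q' A) by apply/(sem_inhabited_empty nQ nQ' A); exists.
by apply/(sem_inhabited_empty nQ nQ' B); exists; exact: h y.
Qed.

Section PartialSurjection.
Variables (Q Q' : finType) (f : Q -> Q' -> Prop).
Hypothesis hf : partial_surjection f.

Lemma lrel_functional_arr A B :
  surjective_rel (lrel f A) -> functional_rel (lrel f B) ->
  functional_rel (lrel f (arr A B)).
Proof.
move=> surjA funB g h h' gh gh'; apply: functional_extensionality => y.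
by have [x xy] := surjA y; apply: (funB (g x)); [apply: gh | apply: gh'].
Qed.

Lemma lrel_surjective_arr A B :
  functional_rel (lrel f A) -> surjective_rel (lrel f B) ->
  surjective_rel (lrel f (arr A B)).
Proof.
move=> funA surjB h.
have : forall x, exists z, forall y, lrel f A x y -> lrel f B z (h y).
  move=> x; case: (classic (exists y, lrel f A x y)) => [[y xy] | nodom].
    have [z zhy] := surjB (h y).
    by exists z => y' xy'; rewrite (funA _ _ _ xy' xy).
  have Q'Q : inhabited Q' -> inhabited Q.
    by case=> q'; have [q _] := hf.2 q'; exists.
  have [z] := sem_arr_default Q'Q x h.
  by exists z => y xy; case: nodom; exists y.
by case/functional_choice => g gh; exists g.
Qed.

Lemma lrel_partial_surjection A :
  functional_rel (lrel f A) /\ surjective_rel (lrel f A).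
Proof.
elim: A => [|A [funA surjA] B [funB surjB]]; first exact: hf.
by split; [apply: lrel_functional_arr | apply: lrel_surjective_arr].
Qed.

Lemma interp_congr A (M N : closed_tm A) :
  interp Q M = interp Q N -> interp Q' M = interp Q' N.
Proof.
move=> eMN; apply: (lrel_partial_surjection A).1 (lrel_interp f M) _.
by rewrite eMN; apply: lrel_interp.
Qed.

End PartialSurjection.

Section Projection.
Variables (Q Q' : finType) (A : ty).

Definition term_of (x : {x : sem Q A | D x}) : closed_tm A :=
  sval (constructive_indefinite_description _ (svalP x)).

Lemma term_ofK x : sval x = interp Q (term_of x).
Proof. exact: svalP (constructive_indefinite_description _ (svalP x)). Qed.

Definition interp_proj (x : {x : sem Q A | D x}) : {y : sem Q' A | D y} :=
  exist _ (interp Q' (term_of x)) (ex_intro _ (term_of x) erefl).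

Variable f : Q -> Q' -> Prop.
Hypothesis hf : partial_surjection f.

Lemma D_lrel_dom x : D x -> exists y, lrel f A x y.
Proof. by case=> M ->; exists (interp Q' M); apply: lrel_interp. Qed.

Lemma lrel_interp_proj x y : lrel f A (sval x) y <-> y = sval (interp_proj x).
Proof.
have x_px : lrel f A (sval x) (sval (interp_proj x)).
  by rewrite term_ofK; apply: lrel_interp.
by split=> [xy | ->] //; apply: (lrel_partial_surjection hf A).1 xy x_px.
Qed.

Lemma interp_proj_interp M (h : D (interp Q M)) :
  sval (interp_proj (exist _ (interp Q M) h)) = interp Q' M.
Proof. by apply: (interp_congr hf); rewrite -term_ofK. Qed.

Lemma interp_proj_unique (p : {x : sem Q A | D x} -> {y : sem Q' A | D y}) :
  (forall M h, sval (p (exist _ (interp Q M) h)) = interp Q' M) ->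
  forall x, sval (p x) = sval (interp_proj x).
Proof.
move=> pE [x hx]; case: (hx) => M eM; subst x.
by rewrite pE interp_proj_interp.
Qed.

Lemma interp_proj_surjective (y : {y : sem Q' A | D y}) : exists x, sval (interp_proj x) = sval y.
Proof.
case: y => y [M eM] /=; rewrite eM.
by exists (exist _ (interp Q M) (ex_intro _ M erefl)); apply: interp_proj_interp.
Qed.

End Projection.

Theorem mainTheorem6 (Q Q' : finType) (f : Q -> Q' -> Prop)
  (hf : partial_surjection f) (A : ty) :
  (* D_Q(A) is contained in the domain of [[A]]_f *)
  (forall x : sem Q A, D x -> exists y, lrel f A x y) /\
  (* the restriction of [[A]]_f to D_Q(A) is a function p : D_Q(A) -> D_Q'(A) *)
  (exists p : {x : sem Q A | D x} -> {y : sem Q' A | D y},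
     (forall (x : {x : sem Q A | D x}) (y : sem Q' A),
         lrel f A (proj1_sig x) y <-> y = proj1_sig (p x)) /\
     (* p([[M]]_Q) = [[M]]_Q' for all M *)
     (forall (M : closed_tm A) (h : D (interp Q M)),
         proj1_sig (p (exist _ (interp Q M) h)) = interp Q' M) /\
     (* p is the unique such function *)
     (forall p' : {x : sem Q A | D x} -> {y : sem Q' A | D y},
         (forall (M : closed_tm A) (h : D (interp Q M)),
             proj1_sig (p' (exist _ (interp Q M) h)) = interp Q' M) ->
         forall x, proj1_sig (p' x) = proj1_sig (p x)) /\
     (* in particular p is surjective *)
     (forall y : {y : sem Q' A | D y}, exists x, proj1_sig (p x) = proj1_sig y)).
Proof.
split; first exact: D_lrel_dom.
exists (@interp_proj Q Q' A); split; first exact: lrel_interp_proj.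
split; first exact: interp_proj_interp hf.
split; first exact: interp_proj_unique hf.
exact: interp_proj_surjective hf.
Qed.
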